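(* With notation as below, for all $M\ge1$, $0\le N\le M-1$, all $1\le x_1<\cdots<x_N\le M$, all $1\le y_1<\cdots<y_{N+1}\le M$ and all nonzero $u\in\mathbb{C}$, $$\langle x^\vee_1\cdots x^\vee_N|\,C(u)\,|y^\vee_1\cdots y^\vee_{N+1}\rangle=\langle y_1\cdots y_{N+1}|\,B(u)\,|x_1\cdots x_N\rangle,$$ where $x^\vee_j=M+1-x_{N+1-j}$ and $y^\vee_j=M+1-y_{N+2-j}$. Consequently, if $x_j=\lambda_{N-j+1}+j$, $y_j=\mu_{N-j+2}+j$ for integer sequences $M-N\ge\lambda_1\ge\cdots\ge\lambda_N\ge0$, $M-N-1\ge\mu_1\ge\cdots\ge\mu_{N+1}\ge0$, and $z=-\beta^{-1}-u^{-2}$, then $$(-\beta)^Nu^{1-M}\langle x_1\cdots x_N|C(u)|y_1\cdots y_{N+1}\rangle=G_{\mu^\vee/\lambda^\vee}(z;\beta),$$ with $\lambda^\vee_j=M-N-\lambda_{N+1-j}$, $\mu^\vee_j=M-N-1-\mu_{N+2-j}$.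
   Context: Fix nonzero $\beta\in\mathbb{C}$. Let $W_a=V_j=\mathbb{C}^2$ with basis $|0\rangle=(1,0)^T$, $|1\rangle=(0,1)^T$; $s=|0\rangle\langle0|$, $n=|1\rangle\langle1|$, $\sigma^+=|0\rangle\langle1|$, $\sigma^-=|1\rangle\langle0|$, subscripts indicating the tensor factor. $L_{aj}(u)=u\,s_as_j+\sigma_a^-\sigma_j^++\sigma_a^+\sigma_j^-+(-\beta^{-1}u-u^{-1})n_as_j-\beta^{-1}u\,n_an_j$ on $W_a\otimes V_j$; $T_a(u)=L_{aM}(u)\cdots L_{a1}(u)$ on $W_a\otimes V_1\otimes\cdots\otimes V_M$; $B(u)={}_a\langle0|T_a(u)|1\rangle_a$ and $C(u)={}_a\langle1|T_a(u)|0\rangle_a$. $|x_1\cdots x_N\rangle$ ($x_1<\cdots<x_N$) is the basis vector with $|1\rangle$ at the factors $x_j$ and $|0\rangle$ elsewhere; $\langle x_1\cdots x_N|$ is the dual basis vector. For a sequence $\mu$ with $N+1$ entries and $\lambda$ with $N$ entries, $G_{\mu/\lambda}(z;\beta)=z^{|\mu|-|\lambda|}\prod_{j=1}^N(1+\beta z-\beta z\,\delta_{\mu_{j+1},\lambda_j})$ if $\mu_j\ge\lambda_j\ge\mu_{j+1}$ for all $1\le j\le N$, and $0$ otherwise, where $|\lambda|=\sum\lambda_j$. *)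

From HB Require Import structures.
From mathcomp Require Import all_boot all_order all_algebra.
Set Implicit Arguments. Unset Strict Implicit. Unset Printing Implicit Defensive.
Import Order.TTheory GRing.Theory Num.Theory.
Local Open Scope ring_scope.

Section Model.
Variable C : numClosedFieldType.

(* Matrix entry  <a' j'| L_{aj}(u) |a j>  (false = |0>, true = |1>),
   first component = auxiliary space W_a, second = quantum space V_j. *)
Definition Lent (beta u : C) (a' j' a j : bool) : C :=
  match a', j', a, j with
  | false, false, false, false => u                          (* u s_a s_j *)
  | true,  false, false, true  => 1                          (* sigma_a^- sigma_j^+ *)
  | false, true,  true,  false => 1                          (* sigma_a^+ sigma_j^- *)
  | true,  false, true,  false => - beta^-1 * u - u^-1       (* n_a s_j *)
  | true,  true,  true,  true  => - beta^-1 * u              (* n_a n_j *)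
  | _, _, _, _ => 0
  end.

(* Matrix entry  <b'| (x) <out| T_a(u) |b> (x) |in>  of the monodromy matrix
   T_a(u) = L_{am}(u) ... L_{a1}(u) on W_a (x) V_1 (x) ... (x) V_m, where
   out, in : nat -> bool give the state of site i (1-based). *)
Fixpoint Tel (beta u : C) (m : nat) (b' b : bool) (out inn : nat -> bool) : C :=
  match m with
  | 0 => (b' == b)%:R
  | m'.+1 => \sum_(c : bool)
               Lent beta u b' (out m'.+1) c (inn m'.+1) * Tel beta u m' c b out inn
  end.

Definition conf (x : seq nat) : nat -> bool := fun i => i \in x.

(* <y| B(u) |x>  with B(u) = _a<0| T_a(u) |1>_a *)
Definition Bel (beta u : C) (M : nat) (y x : seq nat) : C :=
  Tel beta u M false true (conf y) (conf x).
(* <y| C(u) |x>  with C(u) = _a<1| T_a(u) |0>_a *)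
Definition Cel (beta u : C) (M : nat) (y x : seq nat) : C :=
  Tel beta u M true false (conf y) (conf x).

(* G_{mu/lam}(z; beta), mu with N+1 entries, lam with N entries (N = size lam),
   indices shifted to 0-based. *)
Definition Gskew (z beta : C) (mu lam : seq nat) : C :=
  if [forall i : 'I_(size lam),
        (nth 0 mu i.+1 <= nth 0 lam i <= nth 0 mu i)%N]
  then z ^ ((sumn mu)%:Z - (sumn lam)%:Z) *
       \prod_(i < size lam)
          (1 + beta * z - beta * z * (nth 0 mu i.+1 == nth 0 lam i)%:R)
  else 0.

End Model.

Definition dualpos (M : nat) (x : seq nat) : seq nat :=
  rev (map (fun a => (M.+1 - a)%N) x).

Definition validpos (M N : nat) (x : seq nat) : bool :=
  [&& size x == N, sorted ltn x & all (fun a => (1 <= a <= M)%N) x].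

From HB Require Import structures.
From mathcomp Require Import all_boot all_order all_algebra.
From mathcomp Require Import zify ring.
Import Order.TTheory GRing.Theory Num.Theory.
Local Open Scope ring_scope.
Set Implicit Arguments. Unset Strict Implicit.

(* The entries of L are symmetric under exchanging the outgoing
   pair (auxiliary, site) with the incoming one ([Lent_swap]).  Unfolding the
   product T_a(u) = L_{aM} ... L_{a1} from the first site instead of the last
   ([Tel_peel]) then shows that reading the chain backwards transposes a
   matrix element and reflects the sites t |-> M+1-t ([Tel_rev]).  Since
   [dualpos] is exactly this reflection, C(u) between reflected configurations
   is B(u) ([Cel_dualpos]).

   Each L conserves the number of particles, so a matrix element
   is computed by sweeping the chain from site 1 with the auxiliary state as
   the only memory: empty stretches only contribute powers of a vacancy weight
   ([Tel_vacant], [Tel_jump]) and a vanishing state stays zero ([Tel_dead]).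
   The auxiliary particle is created at each y_k and absorbed at each x_k, so
   the element is nonzero iff y_1 < x_1 <= y_2 < ... <= y_{N+1}, with an
   explicit product of step weights ([sweep], [Cel_sweep]).  Substituting
   x_j = lambda_{N-j+1}+j, y_j = mu_{N-j+2}+j turns this interlacing into that
   of the dual partitions ([admissible_dual]), and each step weight, normalised
   by -beta, into one factor of G ([step_factor], [normalised_sweep]). *)

Lemma sumr_bool (R : nmodType) (F : bool -> R) :
  \sum_(c : bool) F c = F true + F false.
Proof. exact: big_bool. Qed.

Section Monodromy.
Variables (C : numClosedFieldType) (beta u : C).

Lemma Lent_swap a' j' a j : Lent beta u a' j' a j = Lent beta u a j a' j'.
Proof. by case: a'; case: j'; case: a; case: j. Qed.

Lemma TelS m b' b o i : Tel beta u m.+1 b' b o i =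
  \sum_(c : bool) Lent beta u b' (o m.+1) c (i m.+1) * Tel beta u m c b o i.
Proof. by []. Qed.

Lemma Tel_ext m b' b o i o' i' :
  (forall t, (0 < t <= m)%N -> o t = o' t /\ i t = i' t) ->
  Tel beta u m b' b o i = Tel beta u m b' b o' i'.
Proof.
elim: m b' => [//|m IH] b' eq_oi /=.
have [-> ->] := eq_oi m.+1 (leqnn _).
apply: eq_bigr => c _; rewrite IH // => t /andP[t_gt0 t_le_m].
by apply: eq_oi; rewrite t_gt0 ltnW.
Qed.

Lemma Tel_peel m b' b o i :
  Tel beta u m.+1 b' b o i =
  \sum_(c : bool) Tel beta u m b' c (fun t => o t.+1) (fun t => i t.+1) *
                  Lent beta u c (o 1%N) b (i 1%N).
Proof.
elim: m b' => [|m IH] b'; first by rewrite /= !sumr_bool; case: b'; case: b => /=; ring.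
rewrite TelS !sumr_bool !IH !TelS !sumr_bool; ring.
Qed.

Lemma Tel_rev m b' b o i :
  Tel beta u m b' b o i =
  Tel beta u m b b' (fun t => i (m.+1 - t)%N) (fun t => o (m.+1 - t)%N).
Proof.
elim: m b' b o i => [|m IH] b' b o i; first by case: b'; case: b.
rewrite [RHS]Tel_peel TelS !sumr_bool (IH true) (IH false) subSS subn0.
by rewrite !(Lent_swap b') ![_ * Lent _ _ _ _ _ _]mulrC.
Qed.

End Monodromy.

Lemma conf_dualpos M x t : all (fun a => (1 <= a <= M)%N) x -> (0 < t <= M)%N ->
  conf (dualpos M x) t = conf x (M.+1 - t)%N.
Proof.
move=> /allP x_in /andP[t_gt0 t_le_M]; rewrite /conf /dualpos mem_rev.
apply/mapP/idP => [[a a_x ->]|x_t]; last by exists (M.+1 - t)%N; rewrite ?subKn //; lia.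
by have /andP[a_ge1 a_le_M] := x_in a a_x; rewrite subKn //; lia.
Qed.

Lemma Cel_dualpos (C : numClosedFieldType) (beta u : C) M N x y :
  validpos M N x -> validpos M N.+1 y ->
  Cel beta u M (dualpos M x) (dualpos M y) = Bel beta u M y x.
Proof.
move=> /and3P[_ _ x_in] /and3P[_ _ y_in].
by rewrite /Bel Tel_rev /Cel; apply: Tel_ext => t t_in; rewrite !conf_dualpos.
Qed.

Section Transfer.
Variables (C : numClosedFieldType) (beta u : C) (o i : nat -> bool).
Local Notation T m b' b := (Tel beta u m b' b o i).

Definition vac_wt (c : bool) : C := Lent beta u c false c false.

Definition dbl_wt : C := Lent beta u true true true true.

Definition vacant (n t : nat) : Prop :=
  forall s, (n < s < t)%N -> o s = false /\ i s = false.

(* Along an empty stretch the auxiliary state is conserved, so the matrix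
   element is only multiplied by a power of the vacancy weight. *)
Lemma Tel_vacant n t b' b : (n <= t)%N -> vacant n t.+1 ->
  T t b' b = vac_wt b' ^+ (t - n) * T n b' b.
Proof.
elim: t b' => [|t IH] b' n_le_t vac.
  by move: n_le_t; rewrite leqn0 => /eqP ->; rewrite expr0 mul1r.
have [n_le_t'|t_lt_n] := leqP n t; last first.
  have -> : n = t.+1 by lia.
  by rewrite subnn expr0 mul1r.
have vac' : vacant n t.+1 by move=> s /andP[n_s s_t]; apply: vac; rewrite n_s ltnW.
rewrite TelS; have [-> ->] := vac t.+1 (introT andP (conj n_le_t' (ltnSn _))).
rewrite sumr_bool !(IH _ n_le_t' vac') subSn //.
by case: b'; rewrite /vac_wt /= exprS; ring.
Qed.

Lemma Tel_jump n t b' b : (n < t)%N -> vacant n t ->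
  T t b' b = \sum_(c : bool) Lent beta u b' (o t) c (i t) *
                              (vac_wt c ^+ (t - n.+1) * T n c b).
Proof.
case: t => [//|t] n_lt_t vac; rewrite TelS subSS.
by apply: eq_bigr => c _; rewrite (Tel_vacant _ _ (n_lt_t : (n <= t)%N) vac).
Qed.

Lemma Tel_dead n m b : (n <= m)%N -> T n true b = 0 -> T n false b = 0 ->
  forall c, T m c b = 0.
Proof.
move=> /subnK <- T1 T0; elim: (m - n)%N => [|k IH] c; first by case: c.
by rewrite addSn TelS sumr_bool !IH !mulr0 addr0.
Qed.

End Transfer.
Arguments Tel_vacant {C beta u o i n t b' b}.
Arguments Tel_jump {C beta u o i n t b' b}.

Definition increasing_on (n : nat) (f : nat -> nat) : Prop :=
  forall a b, (a < b < n)%N -> (f a < f b)%N.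

Lemma increasing_on_le n f a b : increasing_on n f -> (a <= b < n)%N ->
  (f a <= f b)%N.
Proof.
move=> f_incr /andP[]; rewrite leq_eqVlt => /orP[/eqP -> //|a_b b_n].
by apply/ltnW/f_incr; rewrite a_b.
Qed.

Lemma conf_seq_in (f : nat -> nat) n k : (k < n)%N ->
  conf (map f (iota 0 n)) (f k) = true.
Proof. by move=> k_n; apply: map_f; rewrite mem_iota. Qed.

Lemma conf_seq_gap (f : nat -> nat) n j a b t : increasing_on n f ->
  (forall k, (k < j)%N -> (f k <= a)%N) -> ((j < n)%N -> (b <= f j)%N) ->
  (a < t < b)%N -> conf (map f (iota 0 n)) t = false.
Proof.
move=> f_incr below above /andP[a_t t_b].
apply/negbTE/mapP => -[k]; rewrite mem_iota add0n => /andP[_ k_n] t_eq.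
have [k_j|j_k] := ltnP k j; first by have := below k k_j; lia.
have := above (leq_ltn_trans j_k k_n).
have := increasing_on_le f_incr (introT andP (conj j_k k_n)); lia.
Qed.

Section Sweep.
Variables (C : numClosedFieldType) (beta u : C) (N M : nat) (X Y : nat -> nat).
Hypotheses (X_incr : increasing_on N X) (Y_incr : increasing_on N.+1 Y).
Hypotheses (X0_gt0 : (0 < X 0)%N) (Y0_gt0 : (0 < Y 0)%N) (YN_le_M : (Y N <= M)%N).
Local Notation xs := (map X (iota 0 N)).
Local Notation ys := (map Y (iota 0 N.+1)).
Local Notation T m b' := (Tel beta u m b' false (conf xs) (conf ys)).

Lemma ys_before t : (0 < t < Y 0)%N -> conf ys t = false.
Proof. exact: (conf_seq_gap Y_incr (j:=0) (a:=0) (b:=Y 0)). Qed.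

Lemma ys_between j t : (j < N)%N -> (Y j < t < Y j.+1)%N -> conf ys t = false.
Proof.
move=> j_N; apply: (conf_seq_gap Y_incr (j:=j.+1)) => // k k_j.
by apply: increasing_on_le Y_incr _; lia.
Qed.

Lemma ys_after t : (Y N < t)%N -> conf ys t = false.
Proof.
move=> t_gt; apply: (conf_seq_gap Y_incr (j:=N.+1) (a:=Y N) (b:=t.+1)).
- by move=> k k_N; apply: increasing_on_le Y_incr _; lia.
- by rewrite ltnn.
- by rewrite t_gt ltnSn.
Qed.

Definition interlaced (j : nat) : bool :=
  all (fun k => Y k < X k <= Y k.+1)%N (iota 0 j).

(* The sweep survives up to y_{j+1}: the first j steps interlace and x_{j+1},
   if present, lies beyond y_{j+1}. *)
Definition admissible (j : nat) : bool :=
  interlaced j && ((j < N) ==> (Y j < X j))%N.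

Lemma interlacedS j : interlaced j.+1 = interlaced j && (Y j < X j <= Y j.+1)%N.
Proof. by rewrite /interlaced -[in iota 0 j.+1]addn1 iotaD all_cat /= andbT. Qed.

Lemma interlaced_below j : (j <= N)%N -> interlaced j ->
  forall k, (k < j)%N -> (X k <= Y j)%N.
Proof.
move=> j_N /allP inter k k_j.
have /andP[_ Xk_le] : (Y k < X k <= Y k.+1)%N by apply: inter; rewrite mem_iota.
by apply: (leq_trans Xk_le); apply: increasing_on_le Y_incr _; lia.
Qed.

(* Weight collected between y_{k+1} and the next creation point: the
   particle travels to x_{k+1}, and then either the chain is empty of it
   up to y_{k+2}, or x_{k+1} = y_{k+2} is a doubly occupied site. *)
Definition step_wt (k : nat) : C :=
  vac_wt beta u true ^+ (X k - (Y k).+1) *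
  (if (X k < Y k.+1)%N then u ^+ (Y k.+1 - (X k).+1) else dbl_wt beta u).

(* The value the sweep carries at y_{j+1}, in auxiliary state 1. *)
Definition sweep_val (j : nat) : C :=
  if admissible j then u ^+ (Y 0 - 1) * \prod_(k < j) step_wt k else 0.

(* Before y_1 the auxiliary state stays 0 (weight u per site); it becomes 1
   at y_1 unless some x_k <= y_1 has absorbed the absent particle. *)
Lemma sweep_start : T (Y 0) false = 0 /\ T (Y 0) true = sweep_val 0.
Proof.
rewrite /sweep_val /admissible /= big_ord0 mulr1.
have ys_Y0 : conf ys (Y 0) = true := conf_seq_in _ (ltn0Sn N).
case: (boolP ((0 < N) ==> (Y 0 < X 0))%N) => [adm|].
  have xs_off t : (0 < t <= Y 0)%N -> conf xs t = false.
    by apply: (conf_seq_gap X_incr (j:=0) (a:=0) (b:=(Y 0).+1)) => //; apply/implyP.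
  have vac : vacant (conf xs) (conf ys) 0 (Y 0).
    by move=> s s_in; rewrite xs_off ?ys_before //; lia.
  rewrite !(Tel_jump Y0_gt0 vac) !sumr_bool ys_Y0 xs_off /=; last by rewrite Y0_gt0 leqnn.
  by split; ring.
rewrite negb_imply -leqNgt => /andP[N_gt0 X0_le].
have vac : vacant (conf xs) (conf ys) 0 (X 0).
  move=> s s_in; rewrite ys_before; last by lia.
  by rewrite (conf_seq_gap X_incr (j:=0) (a:=0) (b:=X 0)).
have dead c : T (X 0) c = 0.
  rewrite (Tel_jump X0_gt0 vac) sumr_bool conf_seq_in //.
  by case: c; case: (conf ys (X 0)) => /=; ring.
by rewrite !(Tel_dead X0_le (dead true) (dead false)).
Qed.

(* After the particle is absorbed at x_{j+1} < y_{j+2}, it is re-created at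
   y_{j+2} unless x_{j+2} <= y_{j+2} absorbs an absent particle first. *)
Lemma sweep_from_X j w : (j < N)%N -> (Y j < X j)%N -> (X j < Y j.+1)%N ->
  T (X j) true = 0 -> T (X j) false = w ->
  T (Y j.+1) false = 0 /\
  T (Y j.+1) true = if ((j.+1 < N) ==> (Y j.+1 < X j.+1))%N
                    then u ^+ (Y j.+1 - (X j).+1) * w else 0.
Proof.
move=> j_N Yj_lt Xj_lt T1 T0.
have ys_off s : (X j <= s < Y j.+1)%N -> conf ys s = false.
  by move=> s_in; apply: (ys_between j_N); lia.
have xs_le k : (k < j.+1)%N -> (X k <= X j)%N.
  by move=> k_j; apply: increasing_on_le X_incr _; lia.
have ys_Y : conf ys (Y j.+1) = true by apply: conf_seq_in.
case: (boolP ((j.+1 < N) ==> (Y j.+1 < X j.+1))%N) => [adm|].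
  have xs_off s : (X j < s <= Y j.+1)%N -> conf xs s = false.
    by apply: (conf_seq_gap X_incr xs_le (b:=(Y j.+1).+1)) => /(implyP adm).
  have vac : vacant (conf xs) (conf ys) (X j) (Y j.+1).
    by move=> s s_in; rewrite xs_off ?ys_off //; lia.
  rewrite !(Tel_jump Xj_lt vac) !sumr_bool ys_Y T1 T0 xs_off /=;
    last by rewrite Xj_lt leqnn.
  by split; ring.
rewrite negb_imply -leqNgt => /andP[j1_N Xj1_le].
have Xj_lt' : (X j < X j.+1)%N by apply: X_incr; rewrite ltnSn j1_N.
have vac : vacant (conf xs) (conf ys) (X j) (X j.+1).
  move=> s s_in; rewrite ys_off; last by lia.
  by rewrite (conf_seq_gap X_incr xs_le (b:=X j.+1)).
have dead c : T (X j.+1) c = 0.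
  rewrite (Tel_jump Xj_lt' vac) sumr_bool conf_seq_in // T1.
  by case: c; case: (conf ys (X j.+1)) => /=; ring.
by rewrite !(Tel_dead Xj1_le (dead true) (dead false)).
Qed.

Lemma sweep_step_alive j v : (j < N)%N -> interlaced j -> (Y j < X j)%N ->
  T (Y j) false = 0 -> T (Y j) true = v ->
  T (Y j.+1) false = 0 /\
  T (Y j.+1) true = if ((X j <= Y j.+1) && ((j.+1 < N) ==> (Y j.+1 < X j.+1)))%N
                    then v * step_wt j else 0.
Proof.
move=> j_N inter Yj_lt T0 T1.
have xs_off s : (Y j < s < X j)%N -> conf xs s = false.
  exact: (conf_seq_gap X_incr (interlaced_below (ltnW j_N) inter)).
have ys_off s : (Y j < s < Y j.+1)%N -> conf ys s = false by apply: ys_between.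
have Yj_lt' : (Y j < Y j.+1)%N by apply: Y_incr; rewrite ltnSn.
have xs_X : conf xs (X j) = true by apply: conf_seq_in.
have ys_Y : conf ys (Y j.+1) = true by apply: conf_seq_in.
rewrite /step_wt; case: (ltngtP (X j) (Y j.+1)) => [Xj_lt|Yj1_lt|Xj_eq].
- have vac : vacant (conf xs) (conf ys) (Y j) (X j).
    by move=> s s_in; rewrite xs_off ?ys_off //; lia.
  have [T1' T0'] : T (X j) true = 0 /\
                   T (X j) false = vac_wt beta u true ^+ (X j - (Y j).+1) * v.
    rewrite !(Tel_jump Yj_lt vac) !sumr_bool xs_X T0 T1 ys_off /=;
      last by rewrite Yj_lt Xj_lt.
    by split; ring.
  have [-> ->] := sweep_from_X j_N Yj_lt Xj_lt T1' T0'.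
  by case: ifP => _; split=> //; ring.
- have vac : vacant (conf xs) (conf ys) (Y j) (Y j.+1).
    by move=> s s_in; rewrite xs_off ?ys_off //; lia.
  rewrite !(Tel_jump Yj_lt' vac) !sumr_bool ys_Y T0 xs_off /=;
    last by rewrite Yj_lt' Yj1_lt.
  by split; ring.
- have vac : vacant (conf xs) (conf ys) (Y j) (X j).
    by move=> s s_in; rewrite xs_off ?ys_off //; lia.
  have ys_X : conf ys (X j) = true by rewrite Xj_eq.
  rewrite -Xj_eq !(Tel_jump Yj_lt vac) !sumr_bool xs_X ys_X T0 T1 /=.
  have -> : ((j.+1 < N) ==> (X j < X j.+1))%N.
    by apply/implyP => j1_N; apply: X_incr; rewrite ltnSn j1_N.
  by rewrite /dbl_wt /=; split; ring.
Qed.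

Lemma sweep j : (j <= N)%N -> T (Y j) false = 0 /\ T (Y j) true = sweep_val j.
Proof.
elim: j => [_|j IH j_N]; first exact: sweep_start.
have [T0 T1] := IH (ltnW j_N).
rewrite /sweep_val /admissible interlacedS in T1 *.
have [alive|dead] := boolP (interlaced j && ((j < N) ==> (Y j < X j))%N).
  rewrite alive in T1; move/andP: alive => [inter /implyP/(_ j_N) Yj_lt].
  rewrite inter Yj_lt /= big_ord_recr /= mulrA.
  exact: sweep_step_alive.
rewrite (negbTE dead) in T1.
have /negbTE -> : ~~ ((interlaced j && (Y j < X j <= Y j.+1)) &&
                      ((j.+1 < N) ==> (Y j.+1 < X j.+1)))%N.
  by move: dead; rewrite j_N /=; case: (interlaced j); case: (Y j < X j)%N.
have Y_le : (Y j <= Y j.+1)%N by apply: increasing_on_le Y_incr _; lia.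
by rewrite !(Tel_dead Y_le T1 T0).
Qed.

Lemma Cel_sweep : T M true =
  if admissible N
  then u ^+ (Y 0 - 1) * \prod_(k < N) step_wt k * vac_wt beta u true ^+ (M - Y N)
  else 0.
Proof.
have [T0 T1] := sweep (leqnn N); rewrite /sweep_val in T1.
case: ifP T1 => [adm|_] T1; last by rewrite (Tel_dead YN_le_M T1 T0).
have inter : interlaced N by case/andP: adm.
have vac : vacant (conf xs) (conf ys) (Y N) M.+1.
  move=> s s_in; rewrite ys_after; last by lia.
  by rewrite (conf_seq_gap X_incr (interlaced_below (leqnn N) inter) (b:=M.+1)) ?ltnn.
by rewrite (Tel_vacant YN_le_M vac) T1 mulrC.
Qed.

End Sweep.

Section Normalisation.
Variables (C : numClosedFieldType) (beta u : C).
Hypotheses (beta_neq0 : beta != 0) (u_neq0 : u != 0).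
Local Notation z := (- beta^-1 - u^-2).

(* The weight of a step, written with the dual partition indices
   p = lambda^v_j, r = mu^v_j and r1 = mu^v_{j+1}. *)
Definition dual_step (p r1 r : nat) : C :=
  vac_wt beta u true ^+ (r - p) *
  (if (r1 < p)%N then u ^+ (p - r1 - 1) else dbl_wt beta u).

Definition G_factor (r1 p : nat) : C := 1 + beta * z - beta * z * (r1 == p)%:R.

Lemma vac_wt1 : vac_wt beta u true = u * z.
Proof. by rewrite /vac_wt /=; field; rewrite u_neq0. Qed.

Lemma step_factor p r1 r : (r1 <= p <= r)%N ->
  - beta * dual_step p r1 r * u ^+ r1 = z ^+ (r - p) * u ^+ r.+1 * G_factor r1 p.
Proof.
move=> /andP[r1_le p_le]; rewrite /dual_step /G_factor vac_wt1 exprMn /dbl_wt /=.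
case: (ltngtP r1 p) r1_le => // [r1_lt|->] _.
  rewrite (_ : r.+1 = (r - p) + (p - r1 - 1) + r1 + 2)%N; last by lia.
  by rewrite !exprD /=; field; rewrite beta_neq0 u_neq0.
rewrite (_ : r.+1 = (r - p) + p + 1)%N; last by lia.
by rewrite !exprD /=; field; rewrite beta_neq0 u_neq0.
Qed.

Lemma prod_step_factor n (P R : nat -> nat) :
  (forall k, (k < n)%N -> (R k.+1 <= P k <= R k)%N) ->
  (- beta) ^+ n * \prod_(k < n) dual_step (P k) (R k.+1) (R k) * u ^+ R n =
  z ^+ (\sum_(k < n) (R k - P k)) * u ^+ (R 0 + n) *
  \prod_(k < n) G_factor (R k.+1) (P k).
Proof.
elim: n => [_|n IH interl]; first by rewrite !big_ord0 addn0 !expr0 !mulr1 mul1r.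
rewrite !big_ord_recr /=.
transitivity ((- beta) ^+ n * \prod_(k < n) dual_step (P k) (R k.+1) (R k) *
              (- beta * dual_step (P n) (R n.+1) (R n) * u ^+ R n.+1)).
  by rewrite exprSr; ring.
rewrite step_factor ?interl // exprD addnS [u ^+ (R n).+1]exprS [u ^+ (R 0 + n).+1]exprS.
transitivity ((- beta) ^+ n * \prod_(k < n) dual_step (P k) (R k.+1) (R k) *
              u ^+ R n * (z ^+ (R n - P n) * u * G_factor (R n.+1) (P n))).
  by ring.
by rewrite IH => [|k k_n]; [ring | apply: interl; rewrite ltnS ltnW].
Qed.

End Normalisation.

Section DualIndices.
(* Positions X, Y of x_{k+1}, y_{k+1} against the dual parts P k = lambda^v_{k+1},
   R k = mu^v_{k+1}: these relations are the substitution of the theorem. *)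
Variables (N M : nat) (X Y P R : nat -> nat).
Hypothesis XP : forall k, (k < N)%N -> (X k + P k = M - N + k.+1)%N.
Hypothesis YR : forall k, (k <= N)%N -> (Y k + R k = M - N + k)%N.

Lemma admissible_dual :
  admissible N X Y N = [forall k : 'I_N, (R k.+1 <= P k <= R k)%N].
Proof.
rewrite /admissible /interlaced ltnn andbT.
apply/allP/forallP => [inter k|inter k]; last rewrite mem_iota add0n => /= k_N.
  have := inter k; rewrite mem_iota add0n ltn_ord => /(_ isT).
  by have := XP (ltn_ord k); have := YR (ltnW (ltn_ord k)); have := YR (ltn_ord k); lia.
have := inter (Ordinal k_N) => /=.
by have := XP k_N; have := YR (ltnW k_N); have := YR k_N; lia.
Qed.

Variables (C : numClosedFieldType) (beta u : C).

Lemma step_wt_dual k : (k < N)%N ->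
  step_wt beta u X Y k = dual_step beta u (P k) (R k.+1) (R k).
Proof.
move=> k_N; have := XP k_N; have := YR (ltnW k_N); have := YR k_N => YR1 YR0 XP0.
rewrite /step_wt /dual_step (_ : X k - (Y k).+1 = R k - P k)%N; last by lia.
rewrite (_ : (X k < Y k.+1) = (R k.+1 < P k))%N; last by apply/idP/idP; lia.
by rewrite (_ : Y k.+1 - (X k).+1 = P k - R k.+1 - 1)%N //; lia.
Qed.

Hypotheses (beta_neq0 : beta != 0) (u_neq0 : u != 0) (Y0_gt0 : (0 < Y 0)%N).
Local Notation z := (- beta^-1 - u^-2).

Lemma normalised_sweep : (forall k, (k < N)%N -> (R k.+1 <= P k <= R k)%N) ->
  (- beta) ^+ N * u ^ (1 - M%:Z) *
  (u ^+ (Y 0 - 1) * \prod_(k < N) step_wt beta u X Y k *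
   vac_wt beta u true ^+ (M - Y N)) =
  z ^+ (\sum_(k < N) (R k - P k) + R N) * \prod_(k < N) G_factor beta u (R k.+1) (P k).
Proof.
move=> interl; have := YR (leq0n N); have := YR (leqnn N) => YRN YR0.
rewrite (eq_bigr _ (fun k _ => step_wt_dual (ltn_ord k))).
rewrite (_ : M - Y N = R N)%N; last by lia.
rewrite vac_wt1 // exprMn exprD.
transitivity (u ^ (1 - M%:Z) * u ^+ (Y 0 - 1) * z ^+ R N *
  ((- beta) ^+ N * \prod_(k < N) dual_step beta u (P k) (R k.+1) (R k) * u ^+ R N)).
  by ring.
rewrite prod_step_factor //.
transitivity (u ^ (1 - M%:Z) * u ^+ (Y 0 - 1 + (R 0 + N)) *
  (z ^+ (\sum_(k < N) (R k - P k)) * z ^+ R N * \prod_(k < N) G_factor beta u (R k.+1) (P k))).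
  by rewrite !exprD; ring.
rewrite (_ : Y 0 - 1 + (R 0 + N) = M - 1)%N; last by lia.
rewrite exprnP -expfzDr // (_ : 1 - M%:Z + (M - 1)%N%:Z = 0); last by lia.
by rewrite expr0z mul1r.
Qed.
End DualIndices.

Lemma sumn_sub (s t : seq nat) n : size s = n.+1 -> size t = n ->
  (forall k, (k < n)%N -> (nth 0 t k <= nth 0 s k)%N) ->
  (sumn s)%:Z - (sumn t)%:Z = (\sum_(k < n) (nth 0 s k - nth 0 t k) + nth 0 s n)%N.
Proof.
move=> size_s size_t t_le_s.
have sumn_nth (r : seq nat) : sumn r = (\sum_(k < size r) nth 0 r k)%N.
  by rewrite sumnE (big_nth 0) big_mkord.
have sum_sub : (\sum_(k < n) (nth 0 s k - nth 0 t k) + \sum_(k < n) nth 0 t k =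
                \sum_(k < n) nth 0 s k)%N.
  by rewrite -big_split; apply: eq_bigr => k _ /=; rewrite subnK ?t_le_s.
by rewrite !sumn_nth size_s size_t big_ord_recr /= -sum_sub addnAC PoszD addrK.
Qed.

Lemma nth_sorted_geq (s : seq nat) a b : sorted geq s -> (a <= b < size s)%N ->
  (nth 0 s b <= nth 0 s a)%N.
Proof.
move=> s_sorted /andP[a_le b_lt].
have geq_trans : transitive geq by move=> m n p n_m p_n; apply: leq_trans p_n n_m.
by apply: (sorted_leq_nth geq_trans leqnn 0 s_sorted) => //; rewrite inE; lia.
Qed.

Definition xpos (N : nat) (lam : seq nat) (k : nat) : nat :=
  (nth 0 lam (N - k.+1) + k.+1)%N.
Definition ypos (N : nat) (mu : seq nat) (k : nat) : nat :=
  (nth 0 mu (N - k) + k.+1)%N.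

Lemma map_xpos N lam :
  [seq (nth 0 lam (N - j) + j)%N | j <- iota 1 N] = map (xpos N lam) (iota 0 N).
Proof.
rewrite (_ : iota 1 N = iota (1 + 0) N) // iotaDl -map_comp.
by apply: eq_map => k /=; rewrite /xpos add1n.
Qed.

Lemma map_ypos N mu :
  [seq (nth 0 mu (N.+1 - j) + j)%N | j <- iota 1 N.+1] =
  map (ypos N mu) (iota 0 N.+1).
Proof.
rewrite (_ : iota 1 N.+1 = iota (1 + 0) N.+1) // iotaDl -map_comp.
by apply: eq_map => k /=; rewrite /ypos add1n subSS.
Qed.

Lemma xpos_incr N lam : size lam = N -> sorted geq lam -> increasing_on N (xpos N lam).
Proof.
move=> size_lam lam_sorted a b /andP[a_lt b_lt]; rewrite /xpos.
have : (nth 0 lam (N - a.+1) <= nth 0 lam (N - b.+1))%N.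
  by apply: nth_sorted_geq; rewrite ?size_lam; lia.
lia.
Qed.

Lemma ypos_incr N mu : size mu = N.+1 -> sorted geq mu ->
  increasing_on N.+1 (ypos N mu).
Proof.
move=> size_mu mu_sorted a b /andP[a_lt b_lt]; rewrite /ypos.
have : (nth 0 mu (N - a) <= nth 0 mu (N - b))%N.
  by apply: nth_sorted_geq; rewrite ?size_mu; lia.
lia.
Qed.

Lemma xpos_gt0 N lam : (0 < xpos N lam 0)%N. Proof. by rewrite /xpos addn1. Qed.
Lemma ypos_gt0 N mu : (0 < ypos N mu 0)%N. Proof. by rewrite /ypos addn1. Qed.

Lemma ypos_le M N mu : (N < M)%N -> size mu = N.+1 ->
  all (fun a => (a <= M - N - 1)%N) mu -> (ypos N mu N <= M)%N.
Proof.
move=> N_lt_M size_mu mu_le.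
have : (nth 0 mu 0 <= M - N - 1)%N by apply: (allP mu_le); rewrite mem_nth ?size_mu.
by rewrite /ypos subnn; lia.
Qed.

Lemma xpos_dual M N lam : size lam = N -> all (fun a => (a <= M - N)%N) lam ->
  forall k, (k < N)%N ->
  (xpos N lam k + nth 0 [seq (M - N - nth 0 lam (N - j))%N | j <- iota 1 N] k
   = M - N + k.+1)%N.
Proof.
move=> size_lam lam_le k k_N.
rewrite (nth_map 0%N) ?size_iota // nth_iota // add1n /xpos.
have : (nth 0 lam (N - k.+1) <= M - N)%N.
  by apply: (allP lam_le); rewrite mem_nth ?size_lam //; lia.
lia.
Qed.

Lemma ypos_dual M N mu : (N < M)%N -> size mu = N.+1 ->
  all (fun a => (a <= M - N - 1)%N) mu -> forall k, (k <= N)%N ->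
  (ypos N mu k +
   nth 0 [seq (M - N - 1 - nth 0 mu (N.+1 - j))%N | j <- iota 1 N.+1] k
   = M - N + k)%N.
Proof.
move=> N_lt_M size_mu mu_le k k_N.
rewrite (nth_map 0%N) ?size_iota // nth_iota // add1n subSS /ypos.
have : (nth 0 mu (N - k) <= M - N - 1)%N.
  by apply: (allP mu_le); rewrite mem_nth ?size_mu //; lia.
lia.
Qed.

Unset Implicit Arguments. Set Strict Implicit.

Theorem mainTheorem5 (C : numClosedFieldType) (beta : C) (hbeta : beta != 0)
    (M N : nat) (hM : (1 <= M)%N) (hN : (N <= M - 1)%N) :
  (forall (x y : seq nat) (u : C),
     validpos M N x -> validpos M N.+1 y -> u != 0 ->
     Cel beta u M (dualpos M x) (dualpos M y) = Bel beta u M y x)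
  /\
  (forall (lam mu : seq nat) (u : C),
     size lam = N -> size mu = N.+1 ->
     sorted geq lam -> all (fun a => (a <= M - N)%N) lam ->
     sorted geq mu -> all (fun a => (a <= M - N - 1)%N) mu ->
     u != 0 ->
     let x := [seq (nth 0 lam (N - j) + j)%N | j <- iota 1 N] in
     let y := [seq (nth 0 mu (N.+1 - j) + j)%N | j <- iota 1 N.+1] in
     let z := - beta^-1 - u^-2 in
     let lamv := [seq (M - N - nth 0 lam (N - j))%N | j <- iota 1 N] in
     let muv := [seq (M - N - 1 - nth 0 mu (N.+1 - j))%N | j <- iota 1 N.+1] in
     (- beta) ^+ N * u ^ (1 - M%:Z) * Cel beta u M x y = Gskew z beta muv lamv).
Proof.
split=> [x y u x_valid y_valid _|lam mu u size_lam size_mu lam_sorted lam_le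
                                   mu_sorted mu_le u_neq0 x y z lamv muv].
  exact: Cel_dualpos x_valid y_valid.
have N_lt_M : (N < M)%N by lia.
have XP := xpos_dual size_lam lam_le; have YR := ypos_dual N_lt_M size_mu mu_le.
rewrite /Cel /x /y map_xpos map_ypos (Cel_sweep beta u (xpos_incr size_lam lam_sorted)
  (ypos_incr size_mu mu_sorted) (xpos_gt0 _ _) (ypos_gt0 _ _) (ypos_le N_lt_M size_mu mu_le)).
rewrite /Gskew size_map size_iota (admissible_dual XP YR).
case: ifP => [/forallP interl|_]; last by rewrite mulr0.
rewrite (normalised_sweep XP YR hbeta u_neq0 (ypos_gt0 _ _)) => [|k k_N];
  last exact: (interl (Ordinal k_N)).
(* The integer power of z in G is the natural power found above. *)
rewrite (sumn_sub (n:=N)) ?size_map ?size_iota // => k k_N.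
by have /andP[] := interl (Ordinal k_N).
Qed.
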